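(* Let $k$ be a field, $\mathsf{E}$ a locally finite $k$-linear category, and $N$ a locally finite right $\mathsf{E}$-module. Then $N$ is isomorphic to $\Upsilon_{\mathsf{E}^{op}}(\mathcal{N})$ for some (locally finite) right $\mathcal{C}_\mathsf{E}$-comodule $\mathcal{N}$ if and only if, for every object $y\in\mathsf{E}$, the set of all objects $x\in\mathsf{E}$ for which the action map $\operatorname{Hom}_\mathsf{E}(x,y)\otimes_kN(y)\to N(x)$ is nonzero is finite.
   Context: A small $k$-linear category $\mathsf{E}$ has $k$-vector spaces $\operatorname{Hom}_\mathsf{E}(x,y)$, $k$-bilinear associative composition and identities with $\mathrm{id}_x\ne0$. A right $\mathsf{E}$-module is a $k$-linear functor $N:\mathsf{E}^{op}\to k\text{-Vect}$ (spaces $N(x)$ and action maps $\operatorname{Hom}_\mathsf{E}(x,y)\otimes_kN(y)\to N(x)$); it is locally finite if all $N(x)$ are finite-dimensional. Write $x\preceq y$ if there are $n\ge1$ and objects $x=z_0,\dots,z_n=y$ with $\operatorname{Hom}_\mathsf{E}(z_{i-1},z_i)\neq0$ for all $i$. $\mathsf{E}$ is locally finite if all $\operatorname{Hom}_\mathsf{E}(x,y)$ are finite-dimensional and every $\{z:x\preceq z\preceq y\}$ is finite. $\mathcal{C}_\mathsf{E}=\bigoplus_{x,y}\mathcal{C}^{x,y}$, $\mathcal{C}^{x,y}=\operatorname{Hom}_\mathsf{E}(x,y)^*$; counit zero on $\mathcal{C}^{x,y}$ for $x\ne y$, evaluation at $\mathrm{id}_x$ on $\mathcal{C}^{x,x}$;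 comultiplication $\mathcal{C}^{x,y}\to\bigoplus_z\mathcal{C}^{x,z}\otimes\mathcal{C}^{z,y}$ dual to composition $g\otimes h\mapsto hg$. For a right $\mathcal{C}_\mathsf{E}$-comodule $(\mathcal{N},\nu:\mathcal{N}\to\mathcal{N}\otimes\mathcal{C}_\mathsf{E})$ and $\varphi\in\mathcal{C}_\mathsf{E}^*$ set $\varphi\cdot n=(\mathrm{id}\otimes\varphi)\nu(n)$. With $e_x$ evaluation at $\mathrm{id}_x$ on $\mathcal{C}^{x,x}$ (zero elsewhere) and, for $f\in\operatorname{Hom}_\mathsf{E}(x,y)$, $\mathrm{ev}_f$ evaluation at $f$ on $\mathcal{C}^{x,y}$ (zero elsewhere), the functor $\Upsilon_{\mathsf{E}^{op}}$ sends $\mathcal{N}$ to the right $\mathsf{E}$-module with $\Upsilon_{\mathsf{E}^{op}}(\mathcal{N})(x)=e_x\cdot\mathcal{N}$ (with $\mathcal{N}=\bigoplus_xe_x\cdot\mathcal{N}$) and $f\in\operatorname{Hom}_\mathsf{E}(x,y)$ acting $e_y\cdot\mathcal{N}\to e_x\cdot\mathcal{N}$ by $n\mapsto\mathrm{ev}_f\cdot n$. $\mathcal{N}$ is locally finite if $\Upsilon_{\mathsf{E}^{op}}(\mathcal{N})$ is. *)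

From mathcomp Require Import all_boot all_algebra.
From Stdlib Require List.
Set Implicit Arguments.
Unset Strict Implicit.
Unset Printing Implicit Defensive.
Import GRing.Theory.
Local Open Scope ring_scope.

Definition findim (k : fieldType) (V : lmodType k) : Prop :=
  exists (n : nat) (b : 'I_n -> V),
    forall v : V, exists c : 'I_n -> k, v = \sum_(i < n) c i *: b i.

Record kcat (k : fieldType) := KCat {
  obj : Type;
  hom : obj -> obj -> lmodType k;
  comp : forall x y z, hom y z -> hom x y -> hom x z;
  idm : forall x, hom x x;
  comp_linl : forall x y z (a : k) (h1 h2 : hom y z) (g : hom x y),
      comp (a *: h1 + h2) g = a *: comp h1 g + comp h2 g;
  comp_linr : forall x y z (a : k) (h : hom y z) (g1 g2 : hom x y),
      comp h (a *: g1 + g2) = a *: comp h g1 + comp h g2;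
  compA : forall w x y z (h : hom y z) (g : hom x y) (f : hom w x),
      comp h (comp g f) = comp (comp h g) f;
  comp_idl : forall x y (f : hom x y), comp (idm y) f = f;
  comp_idr : forall x y (f : hom x y), comp f (idm x) = f;
  idm_neq0 : forall x, idm x != 0
}.


Arguments hom {k} k0 _ _ : rename.
Arguments idm {k} k0 x : rename.
Arguments comp {k k0 x y z} _ _ : rename.

Section Defs.
Variables (k : fieldType) (E : kcat k).

Definition homnz (x y : obj E) : Prop := exists f : hom E x y, f != 0.

Inductive prec : obj E -> obj E -> Prop :=
| prec1 x y : homnz x y -> prec x y
| precS x z y : homnz x z -> prec z y -> prec x y.

Definition lf_cat : Prop :=
  (forall x y, findim (hom E x y)) /\
  (forall x y, exists zs : seq (obj E),
      forall z, prec x z -> prec z y -> List.In z zs).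

Record rmod := RMod {
  mob : obj E -> lmodType k;
  mact : forall x y, hom E x y -> mob y -> mob x;
  mact_linl : forall x y (a : k) (f1 f2 : hom E x y) (n : mob y),
      mact (a *: f1 + f2) n = a *: mact f1 n + mact f2 n;
  mact_linr : forall x y (f : hom E x y) (a : k) (n1 n2 : mob y),
      mact f (a *: n1 + n2) = a *: mact f n1 + mact f n2;
  mact_id : forall x (n : mob x), mact (idm E x) n = n;
  mact_comp : forall x y z (h : hom E y z) (g : hom E x y) (n : mob z),
      mact (comp h g) n = mact g (mact h n)
}.

Definition lf_mod (N : rmod) : Prop := forall x, findim (mob N x).

(* C_E = (+)_{x,y} Hom_E(x,y)^*.  Since every
   Hom_E(x,y) is finite-dimensional (E locally finite), we model
     NN (x) C_E = (+)_{x,y} NN (x) Hom_E(x,y)^*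
                ~= (+)_{x,y} Hom_k(Hom_E(x,y), NN)
   (n (x) gamma  |->  (f |-> gamma(f) n)).  So the coaction nu : NN -> NN (x) C_E
   is a family  nu n x y : Hom_E(x,y) -> NN, k-linear in f and in n, finitely
   supported in (x,y) for each n.  Under this identification
   (id (x) ev_f) nu(n) = nu n x y f  and  (id (x) e_x) nu(n) = nu n x x id_x,
   and the counit / coassociativity axioms read as below. *)
Record comod := CoMod {
  cV : lmodType k;
  nu : cV -> forall x y, hom E x y -> cV;
  nu_linl : forall (n : cV) x y (a : k) (f1 f2 : hom E x y),
      nu n (a *: f1 + f2) = a *: nu n f1 + nu n f2;
  nu_linr : forall (a : k) (n1 n2 : cV) x y (f : hom E x y),
      nu (a *: n1 + n2) f = a *: nu n1 f + nu n2 f;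
  (* nu(n) lies in the direct sum: only finitely many components nonzero *)
  nu_fin : forall n : cV, exists s : seq (obj E * obj E),
      forall x y (f : hom E x y), nu n f != 0 -> List.In (x, y) s;
  (* counit: (id (x) eps) nu(n) = sum_x nu n x x id_x = n *)
  nu_counit : forall n : cV, exists xs : seq (obj E),
      List.NoDup xs /\
      (forall x, ~ List.In x xs -> nu n (idm E x) = 0) /\
      n = \sum_(x <- xs) nu n (idm E x);
  (* coassociativity (nu (x) id) nu = (id (x) Delta) nu, component of
     C^{x,z} (x) C^{z',y}: equal to nu n (h o g) if z = z', and 0 otherwise *)
  nu_coass : forall x z y (g : hom E x z) (h : hom E z y) (n : cV),
      nu (nu n h) g = nu n (comp h g);
  nu_coass0 : forall x z z' y (g : hom E x z) (h : hom E z' y) (n : cV),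
      z <> z' -> nu (nu n h) g = 0
}.

(* phi . n = (id (x) phi) nu(n) for phi = e_x and phi = ev_f *)
Definition dot_e (C : comod) (x : obj E) (n : cV C) : cV C := nu n (idm E x).
Definition dot_ev (C : comod) x y (f : hom E x y) (n : cV C) : cV C := nu n f.

(* Upsilon(NN)(x) = e_x . NN, as a subset of NN *)
Definition Upsilon_ob (C : comod) (x : obj E) (v : cV C) : Prop :=
  exists w : cV C, v = dot_e x w.

Definition iso_Upsilon (N : rmod) (C : comod) : Prop :=
  exists phi : forall x, mob N x -> cV C,
    (forall x (a : k) (n1 n2 : mob N x),
        phi x (a *: n1 + n2) = a *: phi x n1 + phi x n2) /\
    (forall x, injective (phi x)) /\
    (forall x (v : cV C), (exists n, phi x n = v) <-> Upsilon_ob x v) /\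
    (forall x y (f : hom E x y) (n : mob N y),
        phi x (mact f n) = dot_ev f (phi y n)).

Definition finite_action_support (N : rmod) : Prop :=
  forall y : obj E, exists xs : seq (obj E),
    forall x : obj E,
      (exists (f : hom E x y) (n : mob N y), mact f n != 0) -> List.In x xs.

End Defs.

From Pilot Require Import Defs.
From HB Require Import structures.
From mathcomp Require Import all_boot all_algebra.
From mathcomp Require boolp.
Import Defs.
Set Implicit Arguments.
Unset Strict Implicit.
Unset Printing Implicit Defensive.
Import GRing.Theory.
Local Open Scope ring_scope.

(* If N is isomorphic to Upsilon(NN), the action of f : x -> y on N(y) becomes
   ev_f . _ on e_y . NN, and by coassociativity ev_f . (e_y . w) = ev_f . w,
   which is nonzero for only finitely many (x, y) since nu(w) lies in a direct
   sum; a finite basis of N(y) then leaves only finitely many x with a nonzero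
   action.  Conversely, under the finiteness condition the finitely supported
   sections (+)_x N(x) carry the coaction nu(n)(f) := f . n(y) placed in degree
   x, and e_x picks out the summand N(x). *)

Lemma In_mem (T : eqType) (x : T) (s : seq T) : x \in s -> List.In x s.
Proof.
elim: s => [//|a s IHs]; rewrite inE => /orP [/eqP ->|xs]; first by left.
by right; apply: IHs.
Qed.

Lemma finitely_covered_union (A B : Type) (P : A -> B -> Prop) (l : seq A) :
  (forall a, List.In a l -> exists s, forall b, P a b -> List.In b s) ->
  exists s, forall a b, List.In a l -> P a b -> List.In b s.
Proof.
elim: l => [|a l IHl] cover; first by exists [::].
have [sa Hsa] := cover a (List.in_eq a l).
have [sl Hsl] := IHl (fun a' la' => cover a' (List.in_cons a a' l la')).
exists (sa ++ sl) => a' b [<-|la'] Pab; apply: List.in_or_app.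
  by left; apply: Hsa.
by right; apply: Hsl la' Pab.
Qed.

Section LinearMaps.
Variables (k : fieldType) (V W : lmodType k).

Lemma linear_inj_neq0 (g : V -> W) : linear g -> injective g ->
  forall v, v != 0 -> g v != 0.
Proof.
move=> g_lin g_inj v; apply: contraNneq => gv0; apply/eqP; apply: g_inj.
pose gL : {linear V -> W} := HB.pack g (GRing.isLinear.Build k V W _ g g_lin).
by rewrite gv0 -(linear0 gL).
Qed.

Lemma linear_span_neq0 (g : {linear V -> W}) n (c : 'I_n -> k) (b : 'I_n -> V) :
  g (\sum_(i < n) c i *: b i) != 0 -> exists i, g (b i) != 0.
Proof.
case: (boolP [exists i, g (b i) != 0]) => [/existsP //|/existsPn gb0].
rewrite linear_sum big1 ?eqxx // => i _.
by rewrite linearZ_LR; move/negPn/eqP: (gb0 i) => ->; rewrite scaler0.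
Qed.

End LinearMaps.

HB.instance Definition _ (k : fieldType) (E : kcat k) (N : rmod E) x y
    (f : hom E x y) :=
  GRing.isLinear.Build k (mob N y) (mob N x) _ (mact f) (mact_linr f).

Section ComoduleToModule.
Variables (k : fieldType) (E : kcat k) (C : comod E).

Lemma Upsilon_ob_nu_support y (v : cV C) : Upsilon_ob y v ->
  exists xs, forall x, (exists f : hom E x y, nu v f != 0) -> List.In x xs.
Proof.
case=> w ->; have [s Hs] := nu_fin w.
exists (List.map fst s) => x [f].
rewrite /dot_e nu_coass comp_idl => /Hs.
exact: List.in_map fst s (x, y).
Qed.

Lemma iso_Upsilon_finite_action_support (N : rmod E) :
  lf_mod N -> iso_Upsilon N C -> finite_action_support N.
Proof.
move=> lfN [phi [phi_lin [phi_inj [phi_im phi_nat]]]] y.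
have [m [b span_b]] := lfN y.
have [xs Hxs] := @finitely_covered_union _ _
  (fun i x => exists f : hom E x y, nu (phi y (b i)) f != 0) (enum 'I_m)
  (fun i _ => Upsilon_ob_nu_support ((phi_im y _).1 (ex_intro _ (b i) erefl))).
exists xs => x [f [n]]; have [c ->] := span_b n.
move=> /linear_span_neq0 [i fbi_neq0].
apply: (Hxs i x); first by apply: In_mem; rewrite mem_enum.
exists f; rewrite -[nu _ _]phi_nat.
exact: linear_inj_neq0 (phi_lin x) (phi_inj x) _ fbi_neq0.
Qed.

End ComoduleToModule.

Section FinitelySupportedSections.
Variables (k : fieldType) (E : kcat k) (N : rmod E).

Record fsection := FSection {
  fsec_val : forall x, mob N x;
  fsec_supp : exists xs : seq (obj E), forall x, fsec_val x != 0 -> List.In x xs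
}.

Lemma fsection_ext (s t : fsection) :
  (forall x, fsec_val s x = fsec_val t x) -> s = t.
Proof.
case: s t => [s s_supp] [t t_supp] /= st.
move: t_supp; rewrite -(boolp.functional_extensionality_dep st) => t_supp.
by congr FSection; apply: boolp.Prop_irrelevance.
Qed.

HB.instance Definition _ := boolp.gen_eqMixin fsection.
HB.instance Definition _ := boolp.gen_choiceMixin fsection.

Lemma fsec0_supp :
  exists xs : seq (obj E), forall x, (0 : mob N x) != 0 -> List.In x xs.
Proof. by exists [::] => x; rewrite eqxx. Qed.

Lemma fsec_add_supp (s t : fsection) : exists xs : seq (obj E),
  forall x, fsec_val s x + fsec_val t x != 0 -> List.In x xs.
Proof.
have [xs Hxs] := fsec_supp s; have [ys Hys] := fsec_supp t.
exists (xs ++ ys) => x st_neq0; apply: List.in_or_app.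
have [sx0|/Hxs] := eqVneq (fsec_val s x) 0; last by left.
by right; apply: Hys; rewrite sx0 add0r in st_neq0.
Qed.

Lemma fsec_map_supp (F : forall x, mob N x -> mob N x) :
  (forall x, F x 0 = 0) -> forall s : fsection, exists xs : seq (obj E),
  forall x, F x (fsec_val s x) != 0 -> List.In x xs.
Proof.
move=> F0 s; have [xs Hxs] := fsec_supp s; exists xs => x Fsx_neq0.
by apply: Hxs; apply: contraNneq Fsx_neq0 => ->; rewrite F0.
Qed.

Definition fsec0 := FSection fsec0_supp.
Definition fsec_add s t := FSection (fsec_add_supp s t).
Definition fsec_opp s :=
  FSection (@fsec_map_supp (fun x => -%R) (fun x => oppr0 _) s).
Definition fsec_scale c s :=
  FSection (@fsec_map_supp (fun x => *:%R c) (fun x => scaler0 _ c) s).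

Lemma fsec_addA : associative fsec_add.
Proof. by move=> s t u; apply: fsection_ext => x /=; rewrite addrA. Qed.
Lemma fsec_addC : commutative fsec_add.
Proof. by move=> s t; apply: fsection_ext => x /=; rewrite addrC. Qed.
Lemma fsec_add0 : left_id fsec0 fsec_add.
Proof. by move=> s; apply: fsection_ext => x /=; rewrite add0r. Qed.
Lemma fsec_addN : left_inverse fsec0 fsec_opp fsec_add.
Proof. by move=> s; apply: fsection_ext => x /=; rewrite addNr. Qed.

HB.instance Definition _ :=
  GRing.isZmodule.Build fsection fsec_addA fsec_addC fsec_add0 fsec_addN.

Lemma fsec_scaleA a b s : fsec_scale a (fsec_scale b s) = fsec_scale (a * b) s.
Proof. by apply: fsection_ext => x /=; rewrite scalerA. Qed.
Lemma fsec_scale1 : left_id 1 fsec_scale.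
Proof. by move=> s; apply: fsection_ext => x /=; rewrite scale1r. Qed.
Lemma fsec_scaleDr : right_distributive fsec_scale +%R.
Proof. by move=> a s t; apply: fsection_ext => x /=; rewrite scalerDr. Qed.
Lemma fsec_scaleDl s : {morph fsec_scale^~ s : a b / a + b}.
Proof. by move=> a b; apply: fsection_ext => x /=; rewrite scalerDl. Qed.

HB.instance Definition _ := GRing.Zmodule_isLmodule.Build k fsection
  fsec_scaleA fsec_scale1 fsec_scaleDr fsec_scaleDl.

Definition single_val x (v : mob N x) z : mob N z :=
  match boolp.pselect (z = x) with
  | left zx => eq_rect_r (mob N) v zx
  | right _ => 0
  end.

Lemma single_val_id x (v : mob N x) : single_val v x = v.
Proof.
rewrite /single_val; case: boolp.pselect => [xx|//].
by rewrite (boolp.Prop_irrelevance xx erefl).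
Qed.

Lemma single_val_neq x (v : mob N x) z : z <> x -> single_val v z = 0.
Proof. by rewrite /single_val; case: boolp.pselect. Qed.

Lemma single_supp x (v : mob N x) :
  exists xs : seq (obj E), forall z, single_val v z != 0 -> List.In z xs.
Proof.
exists [:: x] => z; have [->|zx] := boolp.pselect (z = x); first by left.
by rewrite single_val_neq ?eqxx.
Qed.

Definition fsec_single x (v : mob N x) := FSection (single_supp v).

Lemma fsec_single_linear x : linear (@fsec_single x).
Proof.
move=> a u v; apply: fsection_ext => z /=.
have [->|zx] := boolp.pselect (z = x); first by rewrite !single_val_id.
by rewrite !single_val_neq // scaler0 addr0.
Qed.

HB.instance Definition _ x :=
  GRing.isLinear.Build k (mob N x) fsection _ (@fsec_single x)
    (@fsec_single_linear x).

Lemma fsec_single_inj x : injective (@fsec_single x).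
Proof.
by move=> u v /(f_equal (fsec_val^~ x)) /=; rewrite !single_val_id.
Qed.

Lemma sum_single_notin (xs : seq (obj E)) (s : fsection) z :
  ~ List.In z xs ->
  fsec_val (\sum_(x <- xs) fsec_single (fsec_val s x)) z = 0.
Proof.
elim: xs => [|a xs IHxs] z_notin; first by rewrite big_nil.
rewrite big_cons /= single_val_neq; last by move=> za; apply: z_notin; left.
by rewrite add0r IHxs // => z_in; apply: z_notin; right.
Qed.

Lemma sum_single_in (xs : seq (obj E)) (s : fsection) z :
  List.NoDup xs -> List.In z xs ->
  fsec_val (\sum_(x <- xs) fsec_single (fsec_val s x)) z = fsec_val s z.
Proof.
elim: xs => [//|a xs IHxs] /List.NoDup_cons_iff [a_notin xs_nodup].
rewrite big_cons /= => -[az|z_in].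
  by subst z; rewrite single_val_id sum_single_notin ?addr0.
rewrite single_val_neq ?add0r ?IHxs // => za; subst z; exact: a_notin.
Qed.

Lemma fsection_decomp (s : fsection) : exists xs : seq (obj E),
  [/\ List.NoDup xs, forall x, ~ List.In x xs -> fsec_val s x = 0
    & s = \sum_(x <- xs) fsec_single (fsec_val s x)].
Proof.
have [ys Hys] := fsec_supp s; pose xs := List.nodup (fun a b : obj E => boolp.pselect (a = b)) ys.
have s_out x : ~ List.In x xs -> fsec_val s x = 0.
  move=> x_notin; apply/eqP/negPn/negP => sx_neq0.
  by apply: x_notin; apply/List.nodup_In; apply: Hys.
exists xs; split=> //; first exact: List.NoDup_nodup.
apply: fsection_ext => z; have [z_in|z_notin] := boolp.pselect (List.In z xs).
  by rewrite sum_single_in //; apply: List.NoDup_nodup.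
by rewrite sum_single_notin // s_out.
Qed.

Definition fsec_coact (s : fsection) x y (f : hom E x y) : fsection :=
  fsec_single (mact f (fsec_val s y)).

Lemma fsec_coact_linl (s : fsection) x y (a : k) (f1 f2 : hom E x y) :
  fsec_coact s (a *: f1 + f2) = a *: fsec_coact s f1 + fsec_coact s f2.
Proof. by rewrite /fsec_coact mact_linl linearP. Qed.

Lemma fsec_coact_linr (a : k) (s t : fsection) x y (f : hom E x y) :
  fsec_coact (a *: s + t) f = a *: fsec_coact s f + fsec_coact t f.
Proof. by rewrite /fsec_coact /= linearP linearP. Qed.

Lemma fsec_coact_comp x z y (g : hom E x z) (h : hom E z y) (s : fsection) :
  fsec_coact (fsec_coact s h) g = fsec_coact s (comp h g).
Proof. by rewrite /fsec_coact /= single_val_id mact_comp. Qed.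

Lemma fsec_coact_comp0 x z z' y (g : hom E x z) (h : hom E z' y) (s : fsection) :
  z <> z' -> fsec_coact (fsec_coact s h) g = 0.
Proof. by move=> zz'; rewrite /fsec_coact /= single_val_neq // !linear0. Qed.

Lemma fsec_coact_counit (s : fsection) : exists xs : seq (obj E),
  [/\ List.NoDup xs, forall x, ~ List.In x xs -> fsec_coact s (idm E x) = 0
    & s = \sum_(x <- xs) fsec_coact s (idm E x)].
Proof.
have [xs [xs_nodup s_out s_decomp]] := fsection_decomp s.
exists xs; rewrite /fsec_coact; under eq_bigr do rewrite mact_id.
by split=> // x /s_out; rewrite mact_id => ->; rewrite linear0.
Qed.

Hypothesis N_fin : finite_action_support N.

Lemma fsec_coact_fin (s : fsection) : exists ps : seq (obj E * obj E),
  forall x y (f : hom E x y), fsec_coact s f != 0 -> List.In (x, y) ps.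
Proof.
have [ys Hys] := fsec_supp s.
pose acts_on y (p : obj E * obj E) :=
  p.2 = y /\ exists (f : hom E p.1 y) (n : mob N y), mact f n != 0.
have [ps Hps] : exists ps, forall y p, List.In y ys -> acts_on y p -> List.In p ps.
  apply: finitely_covered_union => y _; have [xs Hxs] := N_fin y.
  exists (List.map (pair^~ y) xs) => -[x _] [/= -> act_neq0].
  exact: List.in_map (pair^~ y) xs x (Hxs x act_neq0).
exists ps => x y f; rewrite /fsec_coact => fs_neq0.
have act_neq0 : mact f (fsec_val s y) != 0.
  by apply: contraNneq fs_neq0 => ->; rewrite linear0.
apply: (Hps y); last by split; [|exists f, (fsec_val s y)].
by apply: Hys; apply: contraNneq act_neq0 => ->; rewrite linear0.
Qed.

Definition fsec_comod : comod E :=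
  CoMod fsec_coact_linl fsec_coact_linr fsec_coact_fin
    (fun s => let: ex_intro xs (And3 nd out dec) := fsec_coact_counit s in
       ex_intro _ xs (conj nd (conj out dec)))
    fsec_coact_comp fsec_coact_comp0.

Lemma fsec_iso_Upsilon : iso_Upsilon N fsec_comod.
Proof.
exists fsec_single; split; first by move=> x; apply: linearP.
split; first exact: fsec_single_inj.
split=> [x v|x y f n]; last by rewrite /dot_ev /= /fsec_coact /= single_val_id.
rewrite /Upsilon_ob /dot_e /= /fsec_coact; split=> [[n <-]|[w ->]].
  by exists (fsec_single n); rewrite /= single_val_id mact_id.
by exists (fsec_val w x); rewrite mact_id.
Qed.

End FinitelySupportedSections.

Theorem proposition5p2 (k : fieldType) (E : kcat k) (N : rmod E) :
  lf_cat E -> lf_mod N ->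
  ((exists C : comod E, iso_Upsilon N C) <-> finite_action_support N).
Proof.
move=> _ lfN; split=> [[C]|N_fin].
  exact: iso_Upsilon_finite_action_support.
by exists (fsec_comod N_fin); apply: fsec_iso_Upsilon.
Qed.
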